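(* Let $G$ be a finite group, $\varphi\colon T\to S$ a morphism of $G$-Tambara functors, and $J$ a radical Tambara ideal of $S$. Then the levelwise preimage $\varphi^{-1}(J)$, defined by $\varphi^{-1}(J)(G/H)=\varphi_H^{-1}(J(G/H))$, is a radical Tambara ideal of $T$.
   Context: All rings are commutative with unit. A $G$-Tambara functor $T$ consists of commutative rings $T(G/H)$ for subgroups $H\le G$ with restriction ring maps, additive transfer maps, multiplicative norm maps and conjugation isomorphisms satisfying the standard Tambara axioms (Hill–Mazur). A morphism $\varphi\colon T\to S$ is a family of ring homomorphisms $\varphi_H\colon T(G/H)\to S(G/H)$ commuting with all restrictions, transfers, norms and conjugations. A Tambara ideal is a family of ring ideals $I(G/H)\subseteq T(G/H)$ closed under restriction, transfer, norm and conjugation. $\langle x\rangle$ is the Tambara ideal generated by $x$; products of Tambara ideals are generated by levelwise products. The radical $\sqrt I$ has $\sqrt I(G/H)=\{x\mid \langle x\rangle^n\subseteq I\text{ for some }n\ge1\}$; $I$ is radical if $I=\sqrt I$. *)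

(* G-Tambara functors for a finite group G, indexed by the
   subgroups H of G (G is a subgroup of a finGroupType gT). *)
From HB Require Import structures.
From mathcomp Require Import all_boot all_order all_algebra all_fingroup.

Set Implicit Arguments.
Unset Strict Implicit.
Unset Printing Implicit Defensive.

Import GRing.Theory.
Local Open Scope ring_scope.

Section Tambara.

Variable gT : finGroupType.

Definition cjG (K : {group gT}) (g : gT) : {group gT} := (K :^ g)%G.
Definition capG (A B : {group gT}) : {group gT} := (A :&: B)%G.
Definition genG (A : {set gT}) : {group gT} := (<<A>>)%G.

Definition dc_transversal (H L K R : {set gT}) : Prop :=
  R \subset H /\
  forall h, h \in H -> exists! g, g \in R /\ h \in ((L :* g) * K)%g.

Definition act_sets (h : gT) (U : {set {set gT}}) : {set {set gT}} :=
  [set (h *: C)%g | C in U].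

Definition stabS (H : {set gT}) (U : {set {set gT}}) : {group gT} :=
  genG [set h in H | act_sets h U == U].

Definition subsets_transversal (H K : {set gT}) (RU : {set {set {set gT}}}) :=
  (forall U, U \in RU -> U \subset lcosets K H) /\
  forall U', U' \subset lcosets K H ->
    exists! U, U \in RU /\ exists2 h, h \in H & U' = act_sets h U.

Definition orbit_reps (M K : {set gT}) (U : {set {set gT}}) (Q : {set gT}) :=
  (forall q, q \in Q -> (q *: K)%g \in U) /\
  forall C, C \in U -> exists! q, q \in Q /\ C \subset ((M :* q) * K)%g.

(* sections s : H/K -> H/L of the projection H/L -> H/K (L <= K <= H),
   extended by the empty set outside H/K *)
Definition is_section (H K L : {set gT}) (s : {ffun {set gT} -> {set gT}}) :=
  forall C, if C \in lcosets K H then s C \in lcosets L H /\ s C \subset C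
            else s C = set0.

Definition act_sec (h : gT) (s : {ffun {set gT} -> {set gT}}) :
  {ffun {set gT} -> {set gT}} := [ffun C => (h *: s (h^-1 *: C))%g].

Definition stabF (H : {set gT}) (s : {ffun {set gT} -> {set gT}}) : {group gT} :=
  genG [set h in H | act_sec h s == s].

Definition sections_transversal (H K L : {set gT})
    (RS : {set {ffun {set gT} -> {set gT}}}) :=
  (forall s, s \in RS -> is_section H K L s) /\
  forall s', is_section H K L s' ->
    exists! s, s \in RS /\ exists2 h, h \in H & s' = act_sec h s.

Definition section_reps (H M K L : {set gT}) (s : {ffun {set gT} -> {set gT}})
    (Q : {set gT}) :=
  (forall q, q \in Q -> s (q *: K)%g = (q *: L)%g) /\
  forall C, C \in lcosets K H -> exists! q, q \in Q /\ C \subset ((M :* q) * K)%g.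

Definition addhom (R S : comPzRingType) (f : R -> S) :=
  forall x y, f (x + y) = f x + f y.
Definition rhom (R S : comPzRingType) (f : R -> S) :=
  addhom f /\ (forall x y, f (x * y) = f x * f y) /\ f 1 = 1.

(* ---------- Tambara data ----------
   tres H K : T(G/H) -> T(G/K)    restriction  (K <= H)
   ttr  H K : T(G/K) -> T(G/H)    transfer     (K <= H)
   tnm  H K : T(G/K) -> T(G/H)    norm         (K <= H)
   tcj g H K : T(G/H) -> T(G/K)   conjugation  (K = H :^ g = g^-1 H g)
   The maps are total; the axioms only constrain them on valid indices. *)
Record tambara_data := TambaraData {
  tR : {group gT} -> comPzRingType;
  tres : forall H K : {group gT}, tR H -> tR K;
  ttr : forall H K : {group gT}, tR K -> tR H;
  tnm : forall H K : {group gT}, tR K -> tR H;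
  tcj : gT -> forall H K : {group gT}, tR H -> tR K
}.
Arguments tres : clear implicits.
Arguments ttr : clear implicits.
Arguments tnm : clear implicits.
Arguments tcj : clear implicits.

Section TamLaws.
Variables (G : {group gT}) (T : tambara_data).

Local Notation res := (tres T).
Local Notation tr := (ttr T).
Local Notation nm := (tnm T).
Local Notation cj := (tcj T).

(* the factor N^M_{M ∩ qKq^-1} res c_q a, with a : T(G/A), qAq^-1 ⊇ M ∩ qKq^-1 *)
Definition nfac (M K A : {group gT}) (q : gT) (a : tR T A) : tR T M :=
  nm M (capG M (cjG K q^-1%g))
     (res (cjG A q^-1%g) (capG M (cjG K q^-1%g)) (cj q^-1%g A (cjG A q^-1%g) a)).
Arguments nfac : clear implicits.

Definition tambara_axioms : Prop :=
  (forall H K : {group gT}, H \subset G -> K \subset H -> rhom (res H K)) /\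
  (forall H K : {group gT}, H \subset G -> K \subset H -> addhom (tr H K)) /\
  (forall H K : {group gT}, H \subset G -> K \subset H ->
     (forall x y, nm H K (x * y) = nm H K x * nm H K y) /\
     nm H K 1 = 1 /\ nm H K 0 = 0) /\
  (forall g (H K : {group gT}), g \in G -> H \subset G -> gval K = (H :^ g)%g ->
     rhom (cj g H K)) /\
  (forall H : {group gT}, H \subset G -> forall x : tR T H,
     res H H x = x /\ tr H H x = x /\ nm H H x = x) /\
  (forall H K L : {group gT}, H \subset G -> K \subset H -> L \subset K ->
     (forall x, res K L (res H K x) = res H L x) /\
     (forall y, tr H K (tr K L y) = tr H L y) /\
     (forall y, nm H K (nm K L y) = nm H L y)) /\
  (forall h (H : {group gT}) x, H \subset G -> h \in H -> cj h H H x = x) /\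
  (forall g h (H K L : {group gT}) x, g \in G -> h \in G -> H \subset G ->
     gval K = (H :^ h)%g -> gval L = (K :^ g)%g ->
     cj g K L (cj h H K x) = cj (h * g)%g H L x) /\
  (forall g (H K H' K' : {group gT}), g \in G -> H \subset G -> K \subset H ->
     gval H' = (H :^ g)%g -> gval K' = (K :^ g)%g ->
     (forall x, cj g K K' (res H K x) = res H' K' (cj g H H' x)) /\
     (forall y, cj g H H' (tr H K y) = tr H' K' (cj g K K' y)) /\
     (forall y, cj g H H' (nm H K y) = nm H' K' (cj g K K' y))) /\
  (forall H K : {group gT}, H \subset G -> K \subset H -> forall x y,
     tr H K x * y = tr H K (x * res H K y)) /\
  (forall (H K L : {group gT}) (R : {set gT}), H \subset G -> K \subset H ->
     L \subset H -> dc_transversal H L K R ->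
     (forall x, res H L (tr H K x) =
       \sum_(g in R) tr L (capG L (cjG K g^-1%g))
          (cj g^-1%g (capG K (cjG L g)) (capG L (cjG K g^-1%g))
             (res K (capG K (cjG L g)) x))) /\
     (forall x, res H L (nm H K x) =
       \prod_(g in R) nm L (capG L (cjG K g^-1%g))
          (cj g^-1%g (capG K (cjG L g)) (capG L (cjG K g^-1%g))
             (res K (capG K (cjG L g)) x)))) /\
  (forall (H K : {group gT}) RU (Qa Qb : {set {set gT}} -> {set gT}),
     H \subset G -> K \subset H -> subsets_transversal H K RU ->
     (forall U, U \in RU -> orbit_reps (stabS H U) K U (Qa U) /\
                           orbit_reps (stabS H U) K (lcosets K H :\: U) (Qb U)) ->
     forall a b : tR T K,
     nm H K (a + b) =
       \sum_(U in RU) tr H (stabS H U)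
          ((\prod_(q in Qa U) nfac (stabS H U) K K q a) *
           (\prod_(q in Qb U) nfac (stabS H U) K K q b))) /\
  (forall (H K L : {group gT}) RS (Q : {ffun {set gT} -> {set gT}} -> {set gT}),
     H \subset G -> K \subset H -> L \subset K -> sections_transversal H K L RS ->
     (forall s, s \in RS -> section_reps H (stabF H s) K L s (Q s)) ->
     forall a : tR T L,
     nm H K (tr K L a) =
       \sum_(s in RS) tr H (stabF H s)
          (\prod_(q in Q s) nfac (stabF H s) K L q a)).

End TamLaws.

Record tambara (G : {group gT}) := Tambara {
  tdata :> tambara_data;
  taxioms : tambara_axioms G tdata
}.

Definition tmorphism (G : {group gT}) (T S : tambara_data)
    (phi : forall H : {group gT}, tR T H -> tR S H) : Prop :=
  (forall H : {group gT}, H \subset G -> rhom (phi H)) /\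
  (forall H K : {group gT}, H \subset G -> K \subset H -> forall x,
     phi K (@tres T H K x) = @tres S H K (phi H x)) /\
  (forall H K : {group gT}, H \subset G -> K \subset H -> forall x,
     phi H (@ttr T H K x) = @ttr S H K (phi K x)) /\
  (forall H K : {group gT}, H \subset G -> K \subset H -> forall x,
     phi H (@tnm T H K x) = @tnm S H K (phi K x)) /\
  (forall g (H K : {group gT}), g \in G -> H \subset G -> gval K = (H :^ g)%g ->
     forall x, phi K (@tcj T g H K x) = @tcj S g H K (phi H x)).

Definition tfamily (T : tambara_data) := forall H : {group gT}, tR T H -> Prop.

Definition tideal (G : {group gT}) (T : tambara_data) (I : tfamily T) : Prop :=
  (forall H : {group gT}, H \subset G -> I H 0) /\
  (forall (H : {group gT}) x y, H \subset G -> I H x -> I H y -> I H (x + y)) /\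
  (forall (H : {group gT}) r x, H \subset G -> I H x -> I H (r * x)) /\
  (forall H K : {group gT}, H \subset G -> K \subset H -> forall x,
     I H x -> I K (@tres T H K x)) /\
  (forall H K : {group gT}, H \subset G -> K \subset H -> forall x,
     I K x -> I H (@ttr T H K x)) /\
  (forall H K : {group gT}, H \subset G -> K \subset H -> forall x,
     I K x -> I H (@tnm T H K x)) /\
  (forall g (H K : {group gT}), g \in G -> H \subset G -> gval K = (H :^ g)%g ->
     forall x, I H x -> I K (@tcj T g H K x)).

Definition tsubfam (G : {group gT}) (T : tambara_data) (A B : tfamily T) :=
  forall H : {group gT}, H \subset G -> forall x, A H x -> B H x.

Definition tgen (G : {group gT}) (T : tambara_data) (H0 : {group gT})
    (x : tR T H0) : tfamily T :=
  fun H y => forall I : tfamily T, tideal G I -> I H0 x -> I H y.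

Definition tprod (G : {group gT}) (T : tambara_data) (A B : tfamily T) : tfamily T :=
  fun H y => forall I : tfamily T, tideal G I ->
    (forall (H' : {group gT}) a b, H' \subset G -> A H' a -> B H' b -> I H' (a * b)) ->
    I H y.

(* tpow A n = A^(n+1) *)
Definition tpow (G : {group gT}) (T : tambara_data) (A : tfamily T) (n : nat) :
  tfamily T := iter n (fun P => tprod G P A) A.

(* radical: x with <x>^m ⊆ I for some m >= 1 (m = n+1) *)
Definition tsqrt (G : {group gT}) (T : tambara_data) (I : tfamily T) : tfamily T :=
  fun H x => exists n : nat, @tsubfam G T (@tpow G T (@tgen G T H x) n) I.

Definition tradical (G : {group gT}) (T : tambara_data) (I : tfamily T) : Prop :=
  forall H : {group gT}, H \subset G -> forall x, I H x <-> @tsqrt G T I H x.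

Definition tpreim (T S : tambara_data) (phi : forall H : {group gT}, tR T H -> tR S H)
    (J : tfamily S) : tfamily T :=
  fun H x => J H (phi H x).

End Tambara.

(** The preimage is an ideal levelwise, because [phi] commutes with all the
    operations. For radicality, let [<x>^n] lie in the preimage of [J]. Writing
    [phi_*(A)] for the ideal of [S] generated by the image of an ideal [A] of [T],
    we have [<phi x> <= phi_*(<x>)] and [phi_*(A) phi_*(B) <= phi_*(AB)], hence
    [<phi x>^n <= phi_*(<x>^n) <= J], and [phi x] lies in [J] since [J] is radical.
    The product inclusion needs the explicit description of [phi_*(A)] as the sums
    of transfers [tr_K^L (s * phi a)] with [a] in [A(K)]: Frobenius reciprocity
    then does the rest. That these sums form a Tambara ideal is clear for
    restrictions (double coset formula), conjugations, products and transfers;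
    for norms it follows by induction on the order of the group from the Tambara
    reciprocity formulas, since every summand of the norm of a sum or of a
    transfer is a transfer from a stabiliser of a product containing a factor
    that is a norm from a smaller (or the same) group. *)
From mathcomp Require Import all_boot all_order all_algebra all_fingroup.
From Stdlib Require Import FunctionalExtensionality.

Set Implicit Arguments.
Unset Strict Implicit.
Unset Printing Implicit Defensive.

Import GRing.Theory.

Section GroupActions.
Variable gT : finGroupType.
Implicit Types M K L H : {group gT}.
Local Open Scope group_scope.

Lemma mem_dcosetP M K x z :
  reflect (exists m k, [/\ m \in M, k \in K & z = m * x * k]) (z \in (M :* x) * K).
Proof.
apply: (iffP mulsgP) => [[y k /rcosetP[m Mm ->] Kk ->] | [m [k [Mm Kk ->]]]].
  by exists m, k.
by exists (m * x) k => //; apply/rcosetP; exists m.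
Qed.

Lemma dcoset_refl M K x : x \in (M :* x) * K.
Proof. by apply/mem_dcosetP; exists 1, 1; rewrite !group1 mul1g mulg1. Qed.

Lemma dcoset_eq M K x y : y \in (M :* x) * K -> (M :* y) * K = (M :* x) * K.
Proof.
case/mem_dcosetP=> m [k [Mm Kk ->]]; apply/setP=> z.
apply/mem_dcosetP/mem_dcosetP => -[m' [k' [Mm' Kk' ->]]].
  by exists (m' * m), (k * k'); split; [exact: groupM | exact: groupM | rewrite !mulgA].
exists (m' * m^-1), (k^-1 * k'); split; try by rewrite groupM ?groupV.
by rewrite !mulgA mulgKV mulgK.
Qed.

Lemma dcoset_mulr M K x y k : y \in (M :* x) * K -> k \in K -> y * k \in (M :* x) * K.
Proof.
case/mem_dcosetP=> m [k0 [Mm Kk0 ->]] Kk.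
by apply/mem_dcosetP; exists m, (k0 * k); rewrite groupM // !mulgA.
Qed.

Lemma lcoset_sub_dcoset M K x q : (x *: K \subset (M :* q) * K) = (x \in (M :* q) * K).
Proof.
apply/idP/idP => [/subsetP sub | MqKx]; first by apply: sub; exact: lcoset_refl.
by apply/subsetP=> _ /lcosetP[k Kk ->]; exact: dcoset_mulr.
Qed.

Definition dcoset_reps M K (X : {set gT}) (P : pred gT) : {set gT} :=
  [set odflt x [pick y in (M :* x) * K | (y \in X) && P y] | x in X].

Section DcosetReps.
Variables (M K : {group gT}) (X : {set gT}) (P : pred gT).
Hypothesis dcoset_meets :
  forall x, x \in X -> exists2 y, y \in (M :* x) * K & (y \in X) && P y.

Let rep x := odflt x [pick y in (M :* x) * K | (y \in X) && P y].

Let repP x : x \in X -> rep x \in (M :* x) * K /\ (rep x \in X) && P (rep x).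
Proof.
move=> Xx; rewrite /rep; case: pickP => [y /andP[] // | none] /=.
have [y MxKy Py] := dcoset_meets Xx.
by have := none y; rewrite /= MxKy Py.
Qed.

Let rep_eq x x' : x \in X -> (M :* x) * K = (M :* x') * K -> rep x = rep x'.
Proof.
move=> Xx E; rewrite /rep -E; case: pickP => //= none.
have [y MxKy Py] := dcoset_meets Xx.
by have := none y; rewrite /= MxKy Py.
Qed.

Lemma dcoset_repsP q : q \in dcoset_reps M K X P -> (q \in X) && P q.
Proof. by case/imsetP=> x Xx ->; case: (repP Xx). Qed.

Lemma dcoset_reps_uniq x : x \in X ->
  exists! q, q \in dcoset_reps M K X P /\ x \in (M :* q) * K.
Proof.
move=> Xx; have [MxKr _] := repP Xx.
exists (rep x); split.
  by split; [apply/imsetP; exists x | rewrite (dcoset_eq MxKr) dcoset_refl].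
move=> _ [/imsetP[x' Xx' ->] MrKx].
have [Mx'Kr _] := repP Xx'.
rewrite (dcoset_eq Mx'Kr) in MrKx.
by apply: rep_eq; rewrite ?(dcoset_eq MrKx).
Qed.

End DcosetReps.

Lemma exists_dc_transversal H L K : exists R, dc_transversal H L K R.
Proof.
have meets x : x \in H -> exists2 y, y \in (L :* x) * K & (y \in H) && predT y.
  by move=> Hx; exists x; rewrite ?dcoset_refl ?Hx.
exists (dcoset_reps L K H predT); split; last exact: (dcoset_reps_uniq meets).
by apply/subsetP=> q /(dcoset_repsP meets)/andP[].
Qed.

Definition coset_orbit_reps M K (U : {set {set gT}}) : {set gT} :=
  dcoset_reps M K (cover U) (fun q => q *: K \in U).

Lemma coset_orbit_repsP M K (A : {set gT}) (U : {set {set gT}}) :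
  U \subset lcosets K A -> orbit_reps M K U (coset_orbit_reps M K U).
Proof.
move=> sUA.
have meets x : x \in cover U ->
    exists2 y, y \in (M :* x) * K & (y \in cover U) && (y *: K \in U).
  move=> Ux; exists x; rewrite ?dcoset_refl // Ux.
  have /bigcupP[C UC Cx] := Ux.
  have /lcosetsP[c _ EC] := subsetP sUA C UC.
  by rewrite EC in Cx; rewrite (lcoset_eqP Cx) -EC.
split=> [q /(dcoset_repsP meets)/andP[] // | C UC].
have /lcosetsP[c _ EC] := subsetP sUA C UC.
have Uc : c \in cover U by apply/bigcupP; exists C => //; rewrite EC lcoset_refl.
have [q [[Qq cMqK] uniq]] := dcoset_reps_uniq meets Uc.
exists q; split=> /= [|q' [Qq']]; rewrite EC lcoset_sub_dcoset // => cMq'K.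
exact: uniq.
Qed.

Definition section_orbit_reps H M K L (s : {ffun {set gT} -> {set gT}}) : {set gT} :=
  dcoset_reps M K H (fun q => s (q *: K) == q *: L).

Section SectionReps.
Variables (H M K L : {group gT}) (s : {ffun {set gT} -> {set gT}}).
Hypotheses (sKH : K \subset H) (sec : is_section H K L s).

Let section_meets x : x \in H ->
  exists2 y, y \in (M :* x) * K & (y \in H) && (s (y *: K) == y *: L).
Proof.
move=> Hx; have := sec (x *: K); rewrite mem_lcosets mulGSid // Hx /=.
case=> /lcosetsP[y Hy Es] sub_s.
have xKy : y \in x *: K by apply: (subsetP sub_s); rewrite Es lcoset_refl.
have sxK : x *: K \subset (M :* x) * K by rewrite lcoset_sub_dcoset dcoset_refl.
by exists y; [exact: (subsetP sxK) | rewrite Hy (lcoset_eqP xKy) Es eqxx].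
Qed.

Lemma section_orbit_repsP : section_reps H M K L s (section_orbit_reps H M K L s).
Proof.
split=> [q /(dcoset_repsP section_meets)/andP[_ /eqP] // | C /lcosetsP[c Hc ->]].
have [q [[Qq cMqK] uniq]] := dcoset_reps_uniq section_meets Hc.
exists q; split=> /= [|q' [Qq']]; rewrite lcoset_sub_dcoset // => cMq'K.
exact: uniq.
Qed.

Lemma section_orbit_reps_sub q : q \in section_orbit_reps H M K L s -> q \in H.
Proof. by case/(dcoset_repsP section_meets)/andP. Qed.

End SectionReps.

Lemma exists_orbit_transversal (X : finType) (f : gT -> X -> X) H (P : pred X) :
  (forall x, f 1 x = x) -> (forall a b x, f (a * b) x = f a (f b x)) ->
  (forall h x, h \in H -> P x -> P (f h x)) ->
  exists R : {set X}, (forall x, x \in R -> P x) /\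
    forall x', P x' -> exists! x, x \in R /\ exists2 h, h \in H & x' = f h x.
Proof.
move=> f1 fM fP.
pose orbit x := [set f h x | h in H].
have orbit_refl x : x \in orbit x by apply/imsetP; exists 1; rewrite ?f1.
have orbit_eq x y : y \in orbit x -> orbit y = orbit x.
  case/imsetP=> h Hh ->; apply/setP=> z; apply/imsetP/imsetP => -[k Hk ->].
    by exists (k * h); [exact: groupM | rewrite fM].
  exists (k * h^-1); last by rewrite -fM mulgKV.
  by apply: groupM; rewrite ?groupV.
pose rep x := odflt x [pick y in orbit x].
have rep_orbit x : rep x \in orbit x.
  by rewrite /rep; case: pickP => //= /(_ x); rewrite orbit_refl.
have rep_eq x y : orbit x = orbit y -> rep x = rep y.
  by rewrite /rep => ->; case: pickP => //= /(_ y); rewrite orbit_refl.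
exists [set rep x | x in P]; split.
  move=> _ /imsetP[x Px ->]; have /imsetP[h Hh ->] := rep_orbit x; exact: fP.
move=> x' Px'; exists (rep x'); split.
  split; first by apply/imsetP; exists x'.
  have /imsetP[h Hh Ex] := rep_orbit x'.
  by exists h^-1; rewrite ?groupV // Ex -fM mulVg f1.
move=> _ [/imsetP[y Py ->] [h Hh ->]].
have fh_orbit : f h (rep y) \in orbit (rep y) by apply/imsetP; exists h.
by apply: rep_eq; rewrite (orbit_eq _ _ fh_orbit) (orbit_eq _ _ (rep_orbit y)).
Qed.

Lemma lcosets_act H K h C : h \in H -> (h *: C \in lcosets K H) = (C \in lcosets K H).
Proof.
move=> Hh; apply/lcosetsP/lcosetsP => -[y Hy EC].
  exists (h^-1 * y); last by rewrite lcosetM -EC lcosetK.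
  by apply: groupM; rewrite ?groupV.
by exists (h * y); [exact: groupM | rewrite EC lcosetM].
Qed.

Lemma act_sets1 (U : {set {set gT}}) : act_sets 1 U = U.
Proof. by rewrite /act_sets (eq_imset _ (@lcoset1 gT)) imset_id. Qed.

Lemma act_setsM (a b : gT) U : act_sets (a * b) U = act_sets a (act_sets b U).
Proof. by rewrite /act_sets -imset_comp; apply: eq_imset => C /=; exact: lcosetM. Qed.

Lemma act_sec1 (s : {ffun {set gT} -> {set gT}}) : act_sec 1 s = s.
Proof. by apply/ffunP=> C; rewrite ffunE invg1 !lcoset1. Qed.

Lemma act_secM (a b : gT) s : act_sec (a * b) s = act_sec a (act_sec b s).
Proof. by apply/ffunP=> C; rewrite !ffunE invMg !lcosetM. Qed.

Lemma pred_eq_set (X : finType) (p : {pred X}) (A : {set X}) :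
  (p = A :> {pred X}) <-> [set x | p x] = A.
Proof.
split=> [-> | <-]; first by apply/setP=> x; rewrite inE.
by apply: functional_extensionality => x; rewrite -[RHS]/(x \in [set x | p x]) inE.
Qed.

Lemma exists_subsets_transversal H K : exists RU, subsets_transversal H K RU.
Proof.
have act_lcosets (h : gT) (U : {set {set gT}}) : h \in H -> U \subset lcosets K H ->
    act_sets h U \subset lcosets K H.
  move=> Hh sU; apply/subsetP=> _ /imsetP[C UC ->].
  by rewrite lcosets_act // (subsetP sU).
have [RU [RU_sub RU_uniq]] := exists_orbit_transversal
  (P := fun U : {set {set gT}} => U \subset lcosets K H) act_sets1 act_setsM act_lcosets.
exists RU; split=> // U' sU'.
(* [subsets_transversal] quantifies over predicates [U'], not sets. *)
have sU'set : [set C | U' C] \subset lcosets K H.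
  by apply/subsetP=> C; rewrite inE => /(subsetP sU').
have [U [[RU_U [h Hh EU]] uniq]] := RU_uniq _ sU'set.
exists U; split=> [|V [RV [h' Hh' EV]]].
  by split=> //; exists h => //; apply/pred_eq_set.
by apply: uniq; split=> //; exists h' => //; apply/pred_eq_set.
Qed.

Definition is_sectionb H K L (s : {ffun {set gT} -> {set gT}}) : bool :=
  [forall C, if C \in lcosets K H then (s C \in lcosets L H) && (s C \subset C)
             else s C == set0].

Lemma is_sectionP H K L s : reflect (is_section H K L s) (is_sectionb H K L s).
Proof.
apply: (iffP forallP) => sec C; have := sec C; case: ifP => _.
- by move/andP.
- by move/eqP.
- by case=> -> ->.
- by move=> ->.
Qed.

Lemma exists_sections_transversal H K L : exists RS, sections_transversal H K L RS.
Proof.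
have act_section (h : gT) s : h \in H -> is_sectionb H K L s -> is_sectionb H K L (act_sec h s).
  move=> Hh /is_sectionP sec; apply/is_sectionP => C; rewrite ffunE.
  have := sec (h^-1 *: C); rewrite lcosets_act ?groupV //; case: ifP => _.
    case=> sC sub; split; first by rewrite lcosets_act.
    by rewrite -{2}(lcosetKV h C) lcosetS.
  by move=> ->; apply/setP=> z; rewrite mem_lcoset !inE.
have [RS [RS_sec RS_uniq]] := exists_orbit_transversal act_sec1 act_secM act_section.
exists RS; split=> [s /RS_sec/is_sectionP // | s' /is_sectionP].
exact: RS_uniq.
Qed.

Lemma stabS_sub H U : stabS H U \subset H.
Proof. by rewrite gen_subG; apply/subsetP=> x; rewrite inE => /andP[]. Qed.

Lemma stabF_sub H s : stabF H s \subset H.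
Proof. by rewrite gen_subG; apply/subsetP=> x; rewrite inE => /andP[]. Qed.

Lemma stabF_act H s m : m \in stabF H s -> act_sec m s = s.
Proof.
have stab_group : group_set [set h in H | act_sec h s == s].
  apply/group_setP; split; first by rewrite inE group1 act_sec1 eqxx.
  move=> x y; rewrite !inE => /andP[Hx /eqP Ex] /andP[Hy /eqP Ey].
  by rewrite groupM // act_secM Ey Ex eqxx.
by rewrite /stabF /genG /= gen_set_id // inE => /andP[_ /eqP].
Qed.

(** An element of the stabiliser of [s] that fixes [qK] also fixes [s(qK) = qL]. *)
Lemma stabF_conj_sub H K L (s : {ffun {set gT} -> {set gT}}) q : s (q *: K) = q *: L ->
  stabF H s :&: K :^ q^-1 \subset L :^ q^-1.
Proof.
move=> Es; apply/subsetP=> m /setIP[Sm]; rewrite !mem_conjg invgK !conjgE => Kqmq.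
have EmqK : (m * q) *: K = q *: K by apply/lcoset_eqP; rewrite mem_lcoset.
have := stabF_act Sm; move/ffunP/(_ ((m * q) *: K)).
rewrite ffunE -lcosetM mulKg EmqK Es -lcosetM => /lcoset_eqP.
by rewrite mem_lcoset.
Qed.

Lemma conj_subG (G H : {group gT}) g : g \in G -> H \subset G -> H :^ g \subset G.
Proof. by move=> Gg sHG; rewrite -(conjGid Gg) conjSg. Qed.

Lemma group_mem_lcosets H K : gval K \in lcosets K H.
Proof. by apply/lcosetsP; exists 1; rewrite ?group1 ?lcoset1. Qed.

End GroupActions.

Section TambaraLaws.
Variables (gT : finGroupType) (G : {group gT}) (X : tambara G).
Implicit Types H K L M A : {group gT}.
Local Open Scope ring_scope.
Local Notation res H K := (@tres _ X H K).
Local Notation tr H K := (@ttr _ X H K).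
Local Notation nm H K := (@tnm _ X H K).
Local Notation cj g H K := (@tcj _ X g H K).

Lemma addhom0 (R1 R2 : comPzRingType) (f : R1 -> R2) : addhom f -> f 0 = 0.
Proof. by move=> fD; apply: (addrI (f 0)); rewrite -fD !addr0. Qed.

Section Level.
Variables H K : {group gT}.
Hypotheses (sHG : (H \subset G)%g) (sKH : (K \subset H)%g).

Lemma tresD x y : res H K (x + y) = res H K x + res H K y.
Proof. by case: (taxioms X) => res_rhom _; case: (res_rhom H K sHG sKH). Qed.

Lemma tresM x y : res H K (x * y) = res H K x * res H K y.
Proof. by case: (taxioms X) => res_rhom _; case: (res_rhom H K sHG sKH) => _ []. Qed.

Lemma tres0 : res H K 0 = 0.
Proof. exact/addhom0/tresD. Qed.

Lemma ttrD x y : tr H K (x + y) = tr H K x + tr H K y.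
Proof. by case: (taxioms X) => _ [tr_add _]; exact: tr_add. Qed.

Lemma ttr0 : tr H K 0 = 0.
Proof. exact/addhom0/ttrD. Qed.

Lemma tnmM x y : nm H K (x * y) = nm H K x * nm H K y.
Proof. by case: (taxioms X) => _ [_ [nm_mul _]]; case: (nm_mul H K sHG sKH). Qed.

Lemma tnm0 : nm H K 0 = 0.
Proof. by case: (taxioms X) => _ [_ [nm_mul _]]; case: (nm_mul H K sHG sKH) => _ []. Qed.

Lemma ttr_frobenius x y : tr H K x * y = tr H K (x * res H K y).
Proof.
by case: (taxioms X) => _ [_ [_ [_ [_ [_ [_ [_ [_ [frobenius _]]]]]]]]]; exact: frobenius.
Qed.

End Level.

Lemma tres_id H x : (H \subset G)%g -> res H H x = x.
Proof. by move=> sHG; case: (taxioms X) => _ [_ [_ [_ [ids _]]]]; case: (ids H sHG x). Qed.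

Lemma ttr_id H x : (H \subset G)%g -> tr H H x = x.
Proof.
by move=> sHG; case: (taxioms X) => _ [_ [_ [_ [ids _]]]]; case: (ids H sHG x) => _ [].
Qed.

Lemma ttr_comp H K L y : (H \subset G)%g -> (K \subset H)%g -> (L \subset K)%g ->
  tr H K (tr K L y) = tr H L y.
Proof.
move=> sHG sKH sLK; case: (taxioms X) => _ [_ [_ [_ [_ [trans _]]]]].
by case: (trans H K L sHG sKH sLK) => _ [].
Qed.

Section Conjugation.
Variables (g : gT) (H K : {group gT}).
Hypotheses (Gg : g \in G) (sHG : (H \subset G)%g) (EK : gval K = (H :^ g)%g).

Lemma tcjD x y : cj g H K (x + y) = cj g H K x + cj g H K y.
Proof. by case: (taxioms X) => _ [_ [_ [cj_rhom _]]]; case: (cj_rhom g H K Gg sHG EK). Qed.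

Lemma tcjM x y : cj g H K (x * y) = cj g H K x * cj g H K y.
Proof.
by case: (taxioms X) => _ [_ [_ [cj_rhom _]]]; case: (cj_rhom g H K Gg sHG EK) => _ [].
Qed.

Lemma tcj0 : cj g H K 0 = 0.
Proof. exact/addhom0/tcjD. Qed.

End Conjugation.

Lemma tcj_inner h H x : (H \subset G)%g -> h \in H -> cj h H H x = x.
Proof. by move=> sHG Hh; case: (taxioms X) => _ [_ [_ [_ [_ [_ [inner _]]]]]]; exact: inner. Qed.

Section ConjugationNatural.
Variables (g : gT) (H K H' K' : {group gT}).
Hypotheses (Gg : g \in G) (sHG : (H \subset G)%g) (sKH : (K \subset H)%g)
  (EH : gval H' = (H :^ g)%g) (EK : gval K' = (K :^ g)%g).

Lemma tcj_ttr y : cj g H H' (tr H K y) = tr H' K' (cj g K K' y).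
Proof.
case: (taxioms X) => _ [_ [_ [_ [_ [_ [_ [_ [natural _]]]]]]]].
by case: (natural g H K H' K' Gg sHG sKH EH EK) => _ [].
Qed.

Lemma tcj_tnm y : cj g H H' (nm H K y) = nm H' K' (cj g K K' y).
Proof.
case: (taxioms X) => _ [_ [_ [_ [_ [_ [_ [_ [natural _]]]]]]]].
by case: (natural g H K H' K' Gg sHG sKH EH EK) => _ [].
Qed.

End ConjugationNatural.

Lemma tres_ttr H K L R : (H \subset G)%g -> (K \subset H)%g -> (L \subset H)%g ->
  dc_transversal H L K R -> forall x,
  res H L (tr H K x) =
    \sum_(g in R) tr L (capG L (cjG K g^-1))
       (cj g^-1%g (capG K (cjG L g)) (capG L (cjG K g^-1)) (res K (capG K (cjG L g)) x)).
Proof.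
move=> sHG sKH sLH dcR.
case: (taxioms X) => _ [_ [_ [_ [_ [_ [_ [_ [_ [_ [dcf _]]]]]]]]]].
by case: (dcf H K L R sHG sKH sLH dcR).
Qed.

Lemma tnmD H K RU (Qa Qb : {set {set gT}} -> {set gT}) :
  (H \subset G)%g -> (K \subset H)%g -> subsets_transversal H K RU ->
  (forall U, U \in RU -> orbit_reps (stabS H U) K U (Qa U) /\
                        orbit_reps (stabS H U) K (lcosets K H :\: U) (Qb U)) ->
  forall a b : tR X K,
  nm H K (a + b) =
    \sum_(U in RU) tr H (stabS H U)
       ((\prod_(q in Qa U) nfac (stabS H U) K q a) *
        (\prod_(q in Qb U) nfac (stabS H U) K q b)).
Proof.
by case: (taxioms X) => _ [_ [_ [_ [_ [_ [_ [_ [_ [_ [_ [recip _]]]]]]]]]]]; exact: recip.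
Qed.

Lemma tnm_ttr H K L RS (Q : {ffun {set gT} -> {set gT}} -> {set gT}) :
  (H \subset G)%g -> (K \subset H)%g -> (L \subset K)%g -> sections_transversal H K L RS ->
  (forall s, s \in RS -> section_reps H (stabF H s) K L s (Q s)) ->
  forall a : tR X L,
  nm H K (tr K L a) =
    \sum_(s in RS) tr H (stabF H s) (\prod_(q in Q s) nfac (stabF H s) K q a).
Proof.
by case: (taxioms X) => _ [_ [_ [_ [_ [_ [_ [_ [_ [_ [_ [_ recip]]]]]]]]]]]; exact: recip.
Qed.

Lemma nfacM M K A q (a b : tR X A) : q \in G -> (M \subset G)%g -> (A \subset G)%g ->
  (capG M (cjG K q^-1) \subset cjG A q^-1)%g ->
  nfac M K q (a * b) = nfac M K q a * nfac M K q b :> tR X M.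
Proof.
move=> Gq sMG sAG sZA; have Gqi : (q^-1 \in G)%g by rewrite groupV.
have sAqG : (cjG A q^-1 \subset G)%g by exact: conj_subG.
have sZM : (capG M (cjG K q^-1) \subset M)%g by exact: subsetIl.
by rewrite /nfac tcjM // tresM // tnmM.
Qed.

Lemma nfac_inner H K q u : (H \subset G)%g -> (K \subset H)%g -> q \in H ->
  nfac H K q u = nm H K u :> tR X H.
Proof.
move=> sHG sKH Hq.
have Hqi : (q^-1 \in H)%g by rewrite groupV.
have sKqH : (cjG K q^-1 \subset H)%g by rewrite /= -(conjGid Hqi) conjSg.
have sKqG := subset_trans sKqH sHG.
have EH : gval H = (H :^ q^-1)%g by rewrite conjGid.
have EZ : capG H (cjG K q^-1) = cjG K q^-1 by apply: val_inj; exact/setIidPr.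
rewrite /nfac EZ tres_id // -(@tcj_tnm q^-1 H K H (cjG K q^-1)) ?(subsetP sHG) //.
exact: tcj_inner.
Qed.

End TambaraLaws.

Section Ideals.
Variables (gT : finGroupType) (G : {group gT}) (X : tambara_data gT).
Implicit Types H K M A : {group gT}.
Local Open Scope ring_scope.

Section Laws.
Variable I : tfamily X.
Arguments I : clear implicits.
Hypothesis I_ideal : tideal G I.

Lemma tideal0 H : (H \subset G)%g -> I H 0.
Proof. by case: I_ideal => I0 _; exact: I0. Qed.

Lemma tidealD H x y : (H \subset G)%g -> I H x -> I H y -> I H (x + y).
Proof. by case: I_ideal => _ [ID _]; exact: ID. Qed.

Lemma tidealMl H r x : (H \subset G)%g -> I H x -> I H (r * x).
Proof. by case: I_ideal => _ [_ [IM _]]; exact: IM. Qed.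

Lemma tideal_res H K x : (H \subset G)%g -> (K \subset H)%g -> I H x -> I K (@tres _ X H K x).
Proof. by move=> sHG sKH; case: I_ideal => _ [_ [_ [Ires _]]]; exact: Ires. Qed.

Lemma tideal_tr H K x : (H \subset G)%g -> (K \subset H)%g -> I K x -> I H (@ttr _ X H K x).
Proof. by move=> sHG sKH; case: I_ideal => _ [_ [_ [_ [Itr _]]]]; exact: Itr. Qed.

Lemma tideal_nm H K x : (H \subset G)%g -> (K \subset H)%g -> I K x -> I H (@tnm _ X H K x).
Proof. by move=> sHG sKH; case: I_ideal => _ [_ [_ [_ [_ [Inm _]]]]]; exact: Inm. Qed.

Lemma tideal_cj g H K x : g \in G -> (H \subset G)%g -> gval K = (H :^ g)%g ->
  I H x -> I K (@tcj _ X g H K x).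
Proof. by move=> Gg sHG EK; case: I_ideal => _ [_ [_ [_ [_ [_ Icj]]]]]; exact: Icj. Qed.

Lemma tideal_nfac M K A q a : q \in G -> (M \subset G)%g -> (A \subset G)%g ->
  (capG M (cjG K q^-1) \subset cjG A q^-1)%g -> I A a -> I M (nfac M K q a).
Proof.
move=> Gq sMG sAG sZA Aa; have Gqi : (q^-1 \in G)%g by rewrite groupV.
have sAqG : (cjG A q^-1 \subset G)%g by exact: conj_subG.
exact: (tideal_nm sMG (subsetIl _ _) (tideal_res sAqG sZA (tideal_cj Gqi sAG erefl Aa))).
Qed.

End Laws.

Lemma tideal_bigcap (Phi : tfamily X -> Prop) :
  tideal G (fun H y => forall I : tfamily X, tideal G I -> Phi I -> I H y).
Proof.
do !split.
- by move=> H sHG I I_ideal _; exact: tideal0.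
- move=> H x y sHG Ix Iy I I_ideal PI.
  exact: (tidealD I_ideal sHG (Ix I I_ideal PI) (Iy I I_ideal PI)).
- by move=> H r x sHG Ix I I_ideal PI; exact: (tidealMl I_ideal r sHG (Ix I I_ideal PI)).
- move=> H K sHG sKH x Ix I I_ideal PI.
  exact: (tideal_res I_ideal sHG sKH (Ix I I_ideal PI)).
- move=> H K sHG sKH x Ix I I_ideal PI.
  exact: (tideal_tr I_ideal sHG sKH (Ix I I_ideal PI)).
- move=> H K sHG sKH x Ix I I_ideal PI.
  exact: (tideal_nm I_ideal sHG sKH (Ix I I_ideal PI)).
- move=> g H K Gg sHG EK x Ix I I_ideal PI.
  exact: (tideal_cj I_ideal Gg sHG EK (Ix I I_ideal PI)).
Qed.

Lemma tgen_ideal H0 (x : tR X H0) : tideal G (tgen G x).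
Proof. exact: tideal_bigcap. Qed.

Lemma tprod_ideal (A B : tfamily X) : tideal G (tprod G A B).
Proof. exact: tideal_bigcap. Qed.

Lemma tpow_ideal (A : tfamily X) n : tideal G A -> tideal G (tpow G A n).
Proof. by case: n => [|n] //= _; exact: tprod_ideal. Qed.

End Ideals.

Section Morphisms.
Variables (gT : finGroupType) (G : {group gT}) (T S : tambara_data gT)
  (phi : forall H : {group gT}, tR T H -> tR S H).
Arguments phi : clear implicits.
Hypothesis phi_morph : tmorphism G phi.
Implicit Types H K M A : {group gT}.
Local Open Scope ring_scope.

Lemma tmorphD H x y : (H \subset G)%g -> phi H (x + y) = phi H x + phi H y.
Proof. by case: phi_morph => rmorph _ sHG; case: (rmorph H sHG). Qed.

Lemma tmorphM H x y : (H \subset G)%g -> phi H (x * y) = phi H x * phi H y.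
Proof. by case: phi_morph => rmorph _ sHG; case: (rmorph H sHG) => _ []. Qed.

Lemma tmorph0 H : (H \subset G)%g -> phi H 0 = 0.
Proof. by move=> sHG; apply: addhom0 => x y; exact: tmorphD. Qed.

Lemma tmorph_res H K x : (H \subset G)%g -> (K \subset H)%g ->
  phi K (@tres _ T H K x) = @tres _ S H K (phi H x).
Proof. by move=> sHG sKH; case: phi_morph => _ [res_comm _]; exact: res_comm. Qed.

Lemma tmorph_tr H K x : (H \subset G)%g -> (K \subset H)%g ->
  phi H (@ttr _ T H K x) = @ttr _ S H K (phi K x).
Proof. by move=> sHG sKH; case: phi_morph => _ [_ [tr_comm _]]; exact: tr_comm. Qed.

Lemma tmorph_nm H K x : (H \subset G)%g -> (K \subset H)%g ->
  phi H (@tnm _ T H K x) = @tnm _ S H K (phi K x).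
Proof. by move=> sHG sKH; case: phi_morph => _ [_ [_ [nm_comm _]]]; exact: nm_comm. Qed.

Lemma tmorph_cj g H K x : g \in G -> (H \subset G)%g -> gval K = (H :^ g)%g ->
  phi K (@tcj _ T g H K x) = @tcj _ S g H K (phi H x).
Proof. by move=> Gg sHG EK; case: phi_morph => _ [_ [_ [_ cj_comm]]]; exact: cj_comm. Qed.

Lemma tmorph_nfac M K A q a : q \in G -> (M \subset G)%g -> (A \subset G)%g ->
  (capG M (cjG K q^-1) \subset cjG A q^-1)%g ->
  phi M (nfac M K q a) = nfac M K q (phi A a).
Proof.
move=> Gq sMG sAG sZA; have Gqi : (q^-1 \in G)%g by rewrite groupV.
have sAqG : (cjG A q^-1 \subset G)%g by exact: conj_subG.
have sZM : (capG M (cjG K q^-1) \subset M)%g by exact: subsetIl.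
by rewrite /nfac tmorph_nm // tmorph_res // tmorph_cj.
Qed.

Lemma tpreim_ideal (J : tfamily S) : tideal G J -> tideal G (tpreim phi J).
Proof.
move=> J_ideal; rewrite /tpreim; do !split.
- by move=> H sHG; rewrite tmorph0 //; exact: (tideal0 J_ideal).
- by move=> H x y sHG Jx Jy; rewrite tmorphD //; exact: (tidealD J_ideal).
- by move=> H r x sHG Jx; rewrite tmorphM //; exact: (tidealMl J_ideal).
- by move=> H K sHG sKH x Jx; rewrite tmorph_res //; exact: (tideal_res J_ideal).
- by move=> H K sHG sKH x Jx; rewrite tmorph_tr //; exact: (tideal_tr J_ideal).
- by move=> H K sHG sKH x Jx; rewrite tmorph_nm //; exact: (tideal_nm J_ideal).
- by move=> g H K Gg sHG EK x Jx; rewrite tmorph_cj //; exact: (tideal_cj J_ideal).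
Qed.

End Morphisms.

Section ImageSpan.
Variables (gT : finGroupType) (G : {group gT}) (T : tambara_data gT) (S : tambara G)
  (phi : forall H : {group gT}, tR T H -> tR S H).
Arguments phi : clear implicits.
Hypothesis phi_morph : tmorphism G phi.
Implicit Types H K L M : {group gT}.
Local Open Scope ring_scope.
Local Notation res H K := (@tres _ S H K).
Local Notation tr H K := (@ttr _ S H K).
Local Notation nm H K := (@tnm _ S H K).
Local Notation cj g H K := (@tcj _ S g H K).

Section Span.
Variable A : tfamily T.
Arguments A : clear implicits.

(** The Tambara ideal of [S] generated by [phi A] ([img_span_ideal], [img_span_sub]). *)
Local Unset Implicit Arguments.
Inductive img_span : forall L : {group gT}, tR S L -> Prop :=
| img_span0 L : img_span L 0
| img_spanD L u w : img_span L u -> img_span L w -> img_span L (u + w)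
| img_span_tr L K s a : (K \subset L)%g -> (L \subset G)%g -> A K a ->
    img_span L (tr L K (s * phi K a)).
Local Set Implicit Arguments.
Arguments img_span0 {L}.
Arguments img_spanD {L u w}.
Arguments img_span_tr {L K s a}.

Lemma img_span_unit L s a : (L \subset G)%g -> A L a -> img_span L (s * phi L a).
Proof. by move=> sLG La; have := @img_span_tr L L s a (subxx _) sLG La; rewrite ttr_id. Qed.

Lemma img_span_mull L r v : img_span L v -> img_span L (r * v).
Proof.
move=> span_v; elim: span_v r => {L v} [L | L u w _ IHu _ IHw | L K s a sKL sLG Ka] r.
- by rewrite mulr0; exact: img_span0.
- by rewrite mulrDr; exact: img_spanD.
- by rewrite mulrC ttr_frobenius // mulrAC; exact: img_span_tr.
Qed.

Lemma img_span_mulr L r v : img_span L v -> img_span L (v * r).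
Proof. by rewrite mulrC; exact: img_span_mull. Qed.

Lemma img_span_prod L (Q : {set gT}) (F : gT -> tR S L) q0 :
  q0 \in Q -> img_span L (F q0) -> img_span L (\prod_(q in Q) F q).
Proof. by move=> Qq0 Fq0; rewrite (bigD1 q0) //=; exact: img_span_mulr. Qed.

Lemma img_span_ttr K L v : img_span K v -> (K \subset L)%g -> (L \subset G)%g ->
  img_span L (tr L K v).
Proof.
elim=> {K v} [K | K u w _ IHu _ IHw | K K0 s a sK0K sKG K0a] sKL sLG.
- by rewrite ttr0 //; exact: img_span0.
- by rewrite ttrD //; apply: img_spanD; [exact: IHu | exact: IHw].
- by rewrite ttr_comp //; exact: (img_span_tr (subset_trans sK0K sKL) sLG K0a).
Qed.

Hypothesis A_ideal : tideal G A.

Lemma img_span_tcj H v : img_span H v -> forall g K, g \in G -> (H \subset G)%g ->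
  gval K = (H :^ g)%g -> img_span K (cj g H K v).
Proof.
elim=> {H v} [H | H u w _ IHu _ IHw | H K0 s a sK0H sHG K0a] g K Gg sHG' EK.
- by rewrite tcj0 //; exact: img_span0.
- by rewrite tcjD //; apply: img_spanD; [exact: IHu | exact: IHw].
- have sK0G := subset_trans sK0H sHG.
  rewrite (@tcj_ttr _ _ S g H K0 K (cjG K0 g)) // tcjM // -(tmorph_cj phi_morph) //.
  apply: img_span_tr.
  + by rewrite EK conjSg.
  + by rewrite EK conj_subG.
  + exact: (tideal_cj A_ideal Gg sK0G erefl K0a).
Qed.

Lemma img_span_tres L v : img_span L v -> (L \subset G)%g ->
  forall L', (L' \subset L)%g -> img_span L' (res L L' v).
Proof.
elim=> {L v} [L | L u w _ IHu _ IHw | L K s a sKL sLG Ka] sLG' L' sL'L.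
- by rewrite tres0 //; exact: img_span0.
- by rewrite tresD //; apply: img_spanD; [exact: IHu | exact: IHw].
- have [R dcR] := exists_dc_transversal L L' K.
  have sKG := subset_trans sKL sLG; have sL'G := subset_trans sL'L sLG.
  rewrite (tres_ttr sLG sKL sL'L dcR).
  apply: big_ind => [|x y|g Rg]; [exact: img_span0 | exact: img_spanD |].
  have Gg : g \in G by case: dcR => /subsetP sRL _; exact: (subsetP sLG _ (sRL g Rg)).
  have Ggi : (g^-1 \in G)%g by rewrite groupV.
  have sYK : (capG K (cjG L' g) \subset K)%g by exact: subsetIl.
  have sYG := subset_trans sYK sKG.
  have EY : gval (capG L' (cjG K g^-1)) = (capG K (cjG L' g) :^ g^-1)%g.
    by rewrite /= conjIg conjsgK setIC.
  rewrite tresM // -(tmorph_res phi_morph) // tcjM // -(tmorph_cj phi_morph) //.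
  apply: (img_span_tr (subsetIl _ _) sL'G _).
  exact: (tideal_cj A_ideal Ggi sYG EY (tideal_res A_ideal sKG sYK Ka)).
Qed.

Lemma img_span_nfac M K L q v : q \in G -> (M \subset G)%g -> (L \subset G)%g ->
  (capG M (cjG K q^-1) \subset cjG L q^-1)%g ->
  (forall K' v', img_span K' v' -> (K' \subset M)%g -> img_span M (nm M K' v')) ->
  img_span L v -> img_span M (nfac M K q v).
Proof.
move=> Gq sMG sLG sZL span_nm span_v; have Gqi : (q^-1 \in G)%g by rewrite groupV.
rewrite /nfac; apply: (span_nm _ _ _ (subsetIl _ _)).
apply: (img_span_tres _ (conj_subG Gqi sLG) sZL).
exact: (img_span_tcj span_v Gqi sLG erefl).
Qed.

Section NormOfSum.
Variables H K : {group gT}.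
Hypotheses (sHG : (H \subset G)%g) (sKH : (K \subset H)%g).
Hypothesis span_nm_proper : forall M, (M \proper H)%g ->
  forall K' v, img_span K' v -> (K' \subset M)%g -> img_span M (nm M K' v).

Lemma img_span_nfac_stab M q u : (M \subset H)%g -> q \in H ->
  img_span K u -> img_span H (nm H K u) -> img_span M (nfac M K q u).
Proof.
move=> sMH Hq span_u span_nmu.
have [EMH | neMH] := eqVneq (gval M) (gval H).
  by have -> : M = H := val_inj EMH; rewrite nfac_inner.
have ltMH : (M \proper H)%g by rewrite properEneq neMH sMH.
have Gq := subsetP sHG q Hq.
apply: (img_span_nfac Gq (subset_trans sMH sHG) (subset_trans sKH sHG) (subsetIr _ _) _ span_u).
exact: span_nm_proper.
Qed.

Lemma img_span_tnmD u w :
  img_span K u -> img_span H (nm H K u) -> img_span K w -> img_span H (nm H K w) ->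
  img_span H (nm H K (u + w)).
Proof.
move=> span_u span_nmu span_w span_nmw.
have [RU RUtr] := exists_subsets_transversal H K; have [RU_sub _] := RUtr.
pose Qa U := coset_orbit_reps (stabS H U) K U.
pose Qb U := coset_orbit_reps (stabS H U) K (lcosets K H :\: U).
have Qreps U : U \in RU -> orbit_reps (stabS H U) K U (Qa U) /\
                          orbit_reps (stabS H U) K (lcosets K H :\: U) (Qb U).
  by move=> RU_U; split; apply: coset_orbit_repsP; [exact: RU_sub | exact: subsetDl].
rewrite (tnmD sHG sKH RUtr Qreps).
apply: big_ind => [|x y|U RU_U]; [exact: img_span0 | exact: img_spanD |].
apply: img_span_ttr; rewrite ?stabS_sub //.
have [[QaU QaU_uniq] [QbU QbU_uniq]] := Qreps U RU_U.
have mem_H (V : {set {set gT}}) q : V \subset lcosets K H -> (q *: K)%g \in V -> q \in H.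
  by move=> sV /(subsetP sV); rewrite mem_lcosets mulGSid.
(* The coset [K] lies in [U] or in its complement, so one of the two products
   has a factor. *)
have [UK | UK] := boolP (gval K \in U).
  have [q0 [[Qq0 _] _]] := QaU_uniq _ UK.
  apply: img_span_mulr; apply: (img_span_prod Qq0).
  apply: img_span_nfac_stab => //; first exact: stabS_sub.
  exact: (mem_H _ _ (RU_sub U RU_U) (QaU q0 Qq0)).
have UcK : gval K \in lcosets K H :\: U by rewrite inE UK group_mem_lcosets.
have [q0 [[Qq0 _] _]] := QbU_uniq _ UcK.
apply: img_span_mull; apply: (img_span_prod Qq0).
apply: img_span_nfac_stab => //; first exact: stabS_sub.
exact: (mem_H _ _ (subsetDl _ U) (QbU q0 Qq0)).
Qed.

End NormOfSum.

Lemma img_span_tnm_ttr H K L s a : (H \subset G)%g -> (K \subset H)%g ->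
  (L \subset K)%g -> A L a -> img_span H (nm H K (tr K L (s * phi L a))).
Proof.
move=> sHG sKH sLK La.
have sKG := subset_trans sKH sHG; have sLG := subset_trans sLK sKG.
have [RS RStr] := exists_sections_transversal H K L; have [RS_sec _] := RStr.
pose Q s' := section_orbit_reps H (stabF H s') K L s'.
have Qreps s' : s' \in RS -> section_reps H (stabF H s') K L s' (Q s').
  by move=> RS_s'; apply: section_orbit_repsP => //; exact: RS_sec.
rewrite (tnm_ttr sHG sKH sLK RStr Qreps).
apply: big_ind => [|x y|s' RS_s']; [exact: img_span0 | exact: img_spanD |].
have sMG := subset_trans (stabF_sub H s') sHG.
apply: img_span_ttr; rewrite ?stabF_sub //.
have [Qfix Quniq] := Qreps s' RS_s'.
have [q0 [[Qq0 _] _]] := Quniq _ (group_mem_lcosets H K).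
have Gq0 : q0 \in G.
  exact: (subsetP sHG) (section_orbit_reps_sub sKH (RS_sec s' RS_s') Qq0).
have sZL := stabF_conj_sub H (Qfix q0 Qq0).
apply: (img_span_prod Qq0).
rewrite nfacM // -(tmorph_nfac phi_morph) //.
by apply: img_span_unit => //; exact: (tideal_nfac A_ideal Gq0 sMG sLG sZL La).
Qed.

Lemma img_span_tnm H K v : (H \subset G)%g -> (K \subset H)%g -> img_span K v ->
  img_span H (nm H K v).
Proof.
have [n] := ubnP #|H|; elim: n H K v => // n IHn H K v /ltnSE cardH sHG sKH span_v.
elim: span_v sKH => {K v} [K | K u w span_u IHu span_w IHw | K L s a sLK sKG La] sKH.
- by rewrite tnm0 //; exact: img_span0.
- apply: (img_span_tnmD sHG sKH _ span_u (IHu sKH) span_w (IHw sKH)).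
  move=> M ltMH K' v span_v sK'M.
  apply: (IHn M K' v _ (subset_trans (proper_sub ltMH) sHG) sK'M span_v).
  exact: (leq_trans (proper_card ltMH) cardH).
- exact: img_span_tnm_ttr.
Qed.

Lemma img_span_ideal : tideal G img_span.
Proof.
do !split.
- by move=> H _; exact: img_span0.
- by move=> H x y _; exact: img_spanD.
- by move=> H r x _; exact: img_span_mull.
- by move=> H K sHG sKH x span_x; exact: img_span_tres.
- by move=> H K sHG sKH x span_x; exact: img_span_ttr.
- by move=> H K sHG sKH x span_x; exact: img_span_tnm.
- by move=> g H K Gg sHG EK x span_x; exact: img_span_tcj.
Qed.

End Span.

Lemma img_span_sub (A : tfamily T) (J : tfamily S) : tideal G J ->
  (forall K a, (K \subset G)%g -> A K a -> J K (phi K a)) ->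
  tsubfam G (img_span A) J.
Proof.
move=> J_ideal JA L sLG v span_v.
elim: span_v sLG => {L v} [L | L u w _ IHu _ IHw | L K s a sKL sLG Ka] sLG'.
- exact: (tideal0 J_ideal sLG').
- exact: (tidealD J_ideal sLG' (IHu sLG') (IHw sLG')).
- have sKG := subset_trans sKL sLG.
  exact: (tideal_tr J_ideal sLG sKL (tidealMl J_ideal s sKG (JA K a sKG Ka))).
Qed.

Lemma img_span_tprod_phi (A B : tfamily T) : tideal G A ->
  forall K q, img_span B K q -> (K \subset G)%g ->
  forall a, A K a -> img_span (tprod G A B) K (phi K a * q).
Proof.
move=> A_ideal K q; elim=> {K q} [K | K u w _ IHu _ IHw | K K2 s b sK2K sKG K2b] sKG' a Ka.
- by rewrite mulr0; exact: img_span0.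
- by rewrite mulrDr; apply: img_spanD; [exact: IHu | exact: IHw].
- have sK2G := subset_trans sK2K sKG.
  rewrite mulrC ttr_frobenius // -(tmorph_res phi_morph) // -mulrA (mulrC (phi K2 b)).
  rewrite -(tmorphM phi_morph) //.
  apply: img_span_tr => // I _ prods.
  exact: (prods _ _ _ sK2G (tideal_res A_ideal sKG sK2K Ka) K2b).
Qed.

Lemma img_span_tprod (A B : tfamily T) : tideal G A -> tideal G B ->
  forall L p, img_span A L p -> (L \subset G)%g -> forall q, img_span B L q ->
  img_span (tprod G A B) L (p * q).
Proof.
move=> A_ideal B_ideal L p.
elim=> {L p} [L | L u w _ IHu _ IHw | L K s a sKL sLG Ka] sLG' q span_q.
- by rewrite mul0r; exact: img_span0.
- by rewrite mulrDl; apply: img_spanD; [exact: IHu | exact: IHw].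
- have sKG := subset_trans sKL sLG.
  rewrite ttr_frobenius // -mulrA.
  apply: (img_span_ttr _ sKL sLG); apply: img_span_mull.
  exact: (img_span_tprod_phi A_ideal (img_span_tres B_ideal span_q sLG sKL) sKG Ka).
Qed.

Lemma tpow_tgen_sub_img_span H0 (x : tR T H0) n : (H0 \subset G)%g ->
  tsubfam G (tpow G (tgen G (phi H0 x)) n) (img_span (tpow G (tgen G x) n)).
Proof.
move=> sH0G.
have gen_sub : tsubfam G (tgen G (phi H0 x)) (img_span (tgen G x)).
  move=> L _ y gen_y; apply: (gen_y _ (img_span_ideal (tgen_ideal G x))).
  by rewrite -[phi H0 x]mul1r; apply: (img_span_unit 1 sH0G) => I.
elim: n => [|n IHn] // L sLG y pow_y.
apply: (pow_y _ (img_span_ideal (tprod_ideal G _ _))) => H' a b sH'G pow_a gen_b.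
apply: (img_span_tprod _ _ (IHn H' sH'G a pow_a) sH'G (gen_sub H' sH'G b gen_b)).
- exact: (tpow_ideal n (tgen_ideal G x)).
- exact: (tgen_ideal G x).
Qed.

End ImageSpan.

Theorem lemma6p9 (gT : finGroupType) (G : {group gT}) (T S : tambara G)
    (phi : forall H : {group gT}, tR T H -> tR S H)
    (J : tfamily S) :
  tmorphism G phi -> tideal G J -> tradical G J ->
  tideal G (tpreim phi J) /\ tradical G (tpreim phi J).
Proof.
move=> phi_morph J_ideal J_radical.
have preim_ideal := tpreim_ideal phi_morph J_ideal.
split=> // H sHG x; split=> [preim_x | [n pow_sub]].
  by exists 0%N; move=> L _ y gen_y; exact: (gen_y _ preim_ideal preim_x).
apply/(J_radical H sHG); exists n; move=> L sLG y pow_y.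
have span_y := tpow_tgen_sub_img_span phi_morph sHG sLG pow_y.
apply: (img_span_sub J_ideal _ sLG span_y).
by move=> K a sKG Ka; exact: (pow_sub K sKG a Ka).
Qed.
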